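(* Let $\mathscr{H}$ be a real Hilbert space and let $\mathcal{V}=\{v_n\}_{n=0}^\infty\subset\mathscr{H}$ be a sequence without positive relations such that $\mathcal{C}[[\mathcal{V}]]$ is closed. For $S\subset\mathbb{N}$ let \[ \mathscr{H}(\mathcal{V},S)=\Big\{w\in\mathscr{H} : P_{\mathcal{C}[[\mathcal{V}]]}(w)=\sum_{n\in S}a_nv_n\ \text{with } a_n>0\text{ for all }n\in S\Big\}. \] Then $\mathscr{H}=\bigsqcup_{S\subset\mathbb{N}}\mathscr{H}(\mathcal{V},S)$ (a disjoint union). Moreover, for every $S\subset\mathbb{N}$, the set $\{0\}\cup\mathscr{H}(\mathcal{V},S)$ is a convex cone, and for all $\lambda_1,\lambda_2>0$ and all $w_1,w_2\in\mathscr{H}(\mathcal{V},S)$, \[ P_{\mathcal{C}[[\mathcal{V}]]}(\lambda_1w_1+\lambda_2w_2)=\lambda_1P_{\mathcal{C}[[\mathcal{V}]]}(w_1)+\lambda_2P_{\mathcal{C}[[\mathcal{V}]]}(w_2). \]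
   Context: $\mathbb{N}=\{0,1,2,\dots\}$. $\mathcal{C}[[\mathcal{V}]]=\{\sum_{n=0}^\infty a_n v_n : a_n\ge 0,\ \text{the series converges in }\mathscr{H}\}$ (convergence of partial sums). For $S\subset\mathbb{N}$, $\sum_{n\in S}a_nv_n$ means $\lim_{N\to\infty}\sum_{n\in S,\,n\le N}a_nv_n$, and the empty sum is $0$. A sequence has no positive relations if $\sum a_nv_n=\sum b_nv_n$ for convergent series with $a_n,b_n\ge0$ implies $a_n=b_n$ for all $n$. $P_K$ denotes the metric projection onto a closed convex set $K$ (the unique nearest point). *)

From HB Require Import structures.
From mathcomp Require Import all_boot all_order all_algebra.
From mathcomp Require Import all_classical all_reals all_analysis.
Set Implicit Arguments. Unset Strict Implicit. Unset Printing Implicit Defensive.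
Import Order.TTheory GRing.Theory Num.Theory.
Import numFieldNormedType.Exports.
Local Open Scope classical_set_scope.
Local Open Scope ring_scope.

Section Defs.
Context {R : realType} {H : completeNormedModType R}.

(* ip is a real inner product inducing the norm of H: together with the
   completeness of H this makes H a real Hilbert space. *)
Definition inner_product_of_norm (ip : H -> H -> R) : Prop :=
  [/\ (forall x y, ip x y = ip y x),
      (forall (a : R) x y z, ip (a *: x + y) z = a * ip x z + ip y z)
    & (forall x, `|x| ^+ 2 = ip x x)].

Definition sum_over (S : set nat) (u : nat -> H) (x : H) : Prop :=
  series (fun n => if n \in S then u n else 0) @ \oo --> x.

Definition pos_cone (v : nat -> H) : set H :=
  [set x | exists a : nat -> R, (forall n, 0 <= a n) /\
                                sum_over setT (fun n => a n *: v n) x].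

Definition no_positive_relations (v : nat -> H) : Prop :=
  forall (a b : nat -> R) (x : H),
    (forall n, 0 <= a n) -> (forall n, 0 <= b n) ->
    sum_over setT (fun n => a n *: v n) x ->
    sum_over setT (fun n => b n *: v n) x ->
    forall n, a n = b n.

Definition is_nearest (K : set H) (w p : H) : Prop :=
  K p /\ forall q, K q -> `|w - p| <= `|w - q|.

(* metric projection P_K: the (unique, when K is nonempty closed convex in a
   Hilbert space) nearest point *)
Definition metric_proj (K : set H) (w : H) : H := xget 0 (is_nearest K w).

Definition HVS (v : nat -> H) (S : set nat) : set H :=
  [set w | exists a : nat -> R, (forall n, S n -> 0 < a n) /\
           sum_over S (fun n => a n *: v n) (metric_proj (pos_cone v) w)].

Definition convex_cone (K : set H) : Prop :=
  forall (l1 l2 : R) x y, 0 <= l1 -> 0 <= l2 -> K x -> K y ->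
    K (l1 *: x + l2 *: y).

End Defs.

(* Write P for the metric projection onto the closed convex cone K = C[[V]].
   In a Hilbert space, P w is characterised by P w \in K, <w - P w, q> <= 0 for
   all q \in K and <w - P w, P w> = 0. If P w = sum_{n in S} a_n v_n with all
   a_n > 0, the nonpositive terms a_n <w - P w, v_n> sum to 0, so w - P w is
   orthogonal to every v_n with n in S, hence to P w' for every w' in H(V,S).
   The characterisation then shows that l1 P w1 + l2 P w2 is the projection of
   l1 w1 + l2 w2, which gives additivity and closure under positive
   combinations. Every w lies in H(V,S) for S the support of the coefficients
   of P w, and these coefficients are unique because V has no positive
   relations. *)
From HB Require Import structures.
From mathcomp Require Import all_boot all_order all_algebra.
From mathcomp Require Import all_classical all_reals all_analysis.
From mathcomp Require Import ring lra.
Import Order.TTheory GRing.Theory Num.Theory.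
Import numFieldNormedType.Exports.
Local Open Scope classical_set_scope.
Local Open Scope ring_scope.

Section InnerProduct.
Context {R : realType} {H : completeNormedModType R} {ip : H -> H -> R}.
Hypothesis hip : inner_product_of_norm ip.

Lemma ipC x y : ip x y = ip y x.
Proof. by case: hip. Qed.

Lemma ip_linearl a x y z : ip (a *: x + y) z = a * ip x z + ip y z.
Proof. by case: hip. Qed.

Lemma ipxx x : ip x x = `|x| ^+ 2.
Proof. by case: hip. Qed.

Lemma ip0l z : ip 0 z = 0.
Proof. by have := ip_linearl 1 0 0 z; rewrite scaler0 !addr0 mul1r; lra. Qed.

Lemma ipDl x y z : ip (x + y) z = ip x z + ip y z.
Proof. by rewrite -[x in ip (x + _)]scale1r ip_linearl mul1r. Qed.

Lemma ipZl a x z : ip (a *: x) z = a * ip x z.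
Proof. by rewrite -[a *: x]addr0 ip_linearl ip0l addr0. Qed.

Lemma ipNl x z : ip (- x) z = - ip x z.
Proof. by rewrite -scaleN1r ipZl mulN1r. Qed.

Lemma ipBl x y z : ip (x - y) z = ip x z - ip y z.
Proof. by rewrite ipDl ipNl. Qed.

Lemma ip0r z : ip z 0 = 0.
Proof. by rewrite ipC ip0l. Qed.

Lemma ipDr x y z : ip z (x + y) = ip z x + ip z y.
Proof. by rewrite ipC ipDl !(ipC z). Qed.

Lemma ipZr a x z : ip z (a *: x) = a * ip z x.
Proof. by rewrite ipC ipZl ipC. Qed.

Lemma ipNr x z : ip z (- x) = - ip z x.
Proof. by rewrite ipC ipNl ipC. Qed.

Lemma ipBr x y z : ip z (x - y) = ip z x - ip z y.
Proof. by rewrite ipDr ipNr. Qed.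

Lemma sqr_normD x y : `|x + y| ^+ 2 = `|x| ^+ 2 + 2 * ip x y + `|y| ^+ 2.
Proof. by rewrite -!ipxx ipDl !ipDr (ipC y x); ring. Qed.

Lemma sqr_normB x y : `|x - y| ^+ 2 = `|x| ^+ 2 - 2 * ip x y + `|y| ^+ 2.
Proof. by rewrite sqr_normD ipNr normrN; ring. Qed.

Lemma parallelogram (w a b : H) :
  `|a - b| ^+ 2 = 2 * `|w - a| ^+ 2 + 2 * `|w - b| ^+ 2
                  - 4 * `|w - (2^-1 *: a + 2^-1 *: b)| ^+ 2.
Proof.
rewrite -!ipxx !(ipDl, ipNl, ipZl, ipDr, ipNr, ipZr).
by rewrite (ipC b a) (ipC a w) (ipC b w); field.
Qed.

Lemma cvg_ipr x (u : nat -> H) s :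
  u @ \oo --> s -> (fun n => ip x (u n)) @ \oo --> ip x s.
Proof.
have polar (y : H) : ip x y = (`|x + y| ^+ 2 - `|x| ^+ 2 - `|y| ^+ 2) / 2.
  by rewrite sqr_normD; field.
move=> us; under eq_fun do rewrite polar; rewrite polar.
have xus : (fun n => x + u n) @ \oo --> x + s by apply: cvgD => //; exact: cvg_cst.
apply: cvgM; last exact: cvg_cst.
rewrite !expr2; apply: cvgB; [apply: cvgB|].
- by apply: cvgM; apply: cvg_norm.
- exact: cvg_cst.
- by apply: cvgM; apply: cvg_norm.
Qed.

Lemma cvg_ipr_series x (u : nat -> H) s : series u @ \oo --> s ->
  series (fun n => ip x (u n)) @ \oo --> ip x s.
Proof.
have ip_sum N : ip x (series u N) = series (fun n => ip x (u n)) N.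
  rewrite /series /=; elim: N => [|N IH]; first by rewrite !big_geq // ip0r.
  by rewrite !big_nat_recr //= ipDr IH.
by move=> /(cvg_ipr x); under eq_fun do rewrite ip_sum.
Qed.

End InnerProduct.

Lemma le0_of_quadratic_bound {R : realType} (c M : R) : 0 <= M ->
  (forall t, 0 < t -> t < 1 -> 2 * t * c <= t ^+ 2 * M) -> c <= 0.
Proof.
move=> M0 h; rewrite leNgt; apply/negP => c0.
pose t := c / (c + M + 1).
have ht : t * (c + M + 1) = c by rewrite /t; field; lra.
have t0 : 0 < t by rewrite /t divr_gt0 //; lra.
have t1 : t < 1 by rewrite /t ltr_pdivrMr; lra.
have := h t t0 t1; rewrite expr2 -[t * t * M]mulrA.
have -> : t * M = c - t * c - t by lra.
nra.
Qed.

Lemma cvg_of_sqr_dist_harmonic {R : realType} {H : completeNormedModType R}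
    (q : nat -> H) :
  (forall n m, `|q n - q m| ^+ 2 <= 2 * n.+1%:R^-1 + 2 * m.+1%:R^-1) ->
  cvg (q @ \oo).
Proof.
move=> hq; apply/cauchy_cvgP/cauchy_exP => e e0.
have e2 : 0 < e ^+ 2 / 4 by rewrite divr_gt0 // exprn_gt0.
have [N _ hN] := near_infty_natSinv_lt (PosNum e2).
exists (q N), N => // n /= Nn; rewrite -ball_normE /=.
have /= hNN := hN N (leqnn N).
have nN : n.+1%:R^-1 <= N.+1%:R^-1 :> R by rewrite lef_pV2 ?posrE // ler_nat ltnS.
have : `|q N - q n| ^+ 2 < e ^+ 2.
  move: (hq N n) hNN nN.
  move: (N.+1%:R^-1 : R) (n.+1%:R^-1 : R) => a b; lra.
by rewrite -ltr_sqr ?nnegrE // ltW.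
Qed.

Section NearestPoint.
Context {R : realType} {H : completeNormedModType R} {ip : H -> H -> R}.
Hypothesis hip : inner_product_of_norm ip.
Context {K : set H}.
Hypothesis convexK :
  forall x y (t : R), K x -> K y -> 0 <= t <= 1 -> K ((1 - t) *: x + t *: y).

Lemma nearest_variational {w p q} :
  is_nearest K w p -> K q -> ip (w - p) (q - p) <= 0.
Proof.
move=> [Kp np] Kq.
apply: (@le0_of_quadratic_bound _ _ (`|q - p| ^+ 2)) => [|t t0 t1].
  exact: sqr_ge0.
have Kt : K ((1 - t) *: p + t *: q) by apply: convexK => //; lra.
have : `|w - p| ^+ 2 <= `|(w - p) - t *: (q - p)| ^+ 2.
  have -> : w - p - t *: (q - p) = w - ((1 - t) *: p + t *: q).
    by rewrite scalerBl scale1r scalerBr !opprD !opprK !addrA addrAC.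
  by rewrite ler_sqr ?nnegrE //; exact: np.
rewrite [X in _ <= X](sqr_normB hip) (ipZr hip) normrZ exprMn.
by rewrite ger0_norm ?(ltW t0); lra.
Qed.

Lemma nearest_unique {w p1 p2} :
  is_nearest K w p1 -> is_nearest K w p2 -> p1 = p2.
Proof.
move=> h1 h2; have : `|p2 - p1| ^+ 2 <= 0.
  have := nearest_variational h1 h2.1; have := nearest_variational h2 h1.1.
  have -> : w - p2 = (w - p1) - (p2 - p1) by rewrite opprB addrA subrK.
  have -> : p1 - p2 = - (p2 - p1) by rewrite opprB.
  by rewrite (ipNr hip) (ipBl hip) (ipxx hip); lra.
move=> h; apply/esym/eqP.
by rewrite -subr_eq0 -normr_eq0 -sqrf_eq0 eq_le h sqr_ge0.
Qed.

Lemma nearest_exists :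
  closed K -> forall z, K z -> forall w, exists p, is_nearest K w p.
Proof.
move=> closedK z Kz w.
pose E := [set r | exists2 q, K q & r = `|w - q| ^+ 2].
have lbE : has_lbound E by exists 0 => r [q _ ->]; exact: sqr_ge0.
pose D := inf E.
have hinf : has_inf E by split => //; exists (`|w - z| ^+ 2), z.
have Dle q : K q -> D <= `|w - q| ^+ 2 by move=> Kq; apply: (ge_inf lbE); exists q.
have /choice [q hq] n : exists q, K q /\ `|w - q| ^+ 2 < D + n.+1%:R^-1.
  have [_ [q Kq ->] ?] := @inf_adherent R E n.+1%:R^-1 ltac:(by []) hinf.
  by exists q.
(* A minimizing sequence is Cauchy by the parallelogram law. *)
have /cvg_of_sqr_dist_harmonic cq : forall n m,
    `|q n - q m| ^+ 2 <= 2 * n.+1%:R^-1 + 2 * m.+1%:R^-1.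
  move=> n m; rewrite (parallelogram hip w).
  have Kmid : K (2^-1 *: q n + 2^-1 *: q m).
    have := @convexK _ _ 2^-1 (hq n).1 (hq m).1.
    rewrite [1 - _](_ : _ = 2^-1 :> R); last by field.
    by apply; rewrite invr_ge0 invf_le1 //=; lra.
  move: (Dle _ Kmid) (hq n).2 (hq m).2.
  by move: (n.+1%:R^-1 : R) (m.+1%:R^-1 : R) => a b; lra.
have Klim : K (lim (q @ \oo)).
  by apply: (closed_cvg _ closedK _ _ cq); apply: nearW => n; exact: (hq n).1.
exists (lim (q @ \oo)); split => // q' Kq'.
rewrite -ler_sqr ?nnegrE //.
have : (fun n => `|w - q n| ^+ 2 - n.+1%:R^-1) @ \oo --> `|w - lim (q @ \oo)| ^+ 2 - 0.
  apply: cvgB; last exact: cvg_harmonic.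
  by rewrite !expr2; apply: cvgM; apply: cvg_norm; apply: cvgB => //; exact: cvg_cst.
rewrite subr0 => /ler_cvg_to; apply; first exact: cvg_cst.
apply: nearW => n /=; move: (hq n).2 (Dle q' Kq').
by move: (n.+1%:R^-1 : R) => a; lra.
Qed.

End NearestPoint.

Section ConvexCone.
Context {R : realType} {H : completeNormedModType R}.
Context {K : set H}.
Hypothesis coneK : convex_cone K.

Lemma convex_cone_convex x y (t : R) :
  K x -> K y -> 0 <= t <= 1 -> K ((1 - t) *: x + t *: y).
Proof. by move=> Kx Ky /andP[t0 t1]; apply: coneK => //; rewrite subr_ge0. Qed.

Lemma convex_cone0 z : K z -> K 0.
Proof.
by move=> Kz; have := coneK 0 0 z z (lexx 0) (lexx 0) Kz Kz; rewrite !scale0r addr0.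
Qed.

Context {ip : H -> H -> R}.
Hypothesis hip : inner_product_of_norm ip.

Lemma nearest_coneP w p : is_nearest K w p <->
  [/\ K p, forall q, K q -> ip (w - p) q <= 0 & ip (w - p) p = 0].
Proof.
split=> [hn|[Kp neg orth]].
  have Kp := hn.1; have var q := nearest_variational hip convex_cone_convex hn q.
  have K2p : K (2 *: p).
    by have := coneK 2 0 p p (ler0n _ 2) (lexx 0) Kp Kp; rewrite scale0r addr0.
  have := var _ (convex_cone0 _ Kp); have := var _ K2p.
  rewrite sub0r (ipNr hip) scalerDl scale1r addrK => h2 h0.
  split => [//||]; last by lra.
  move=> q Kq; have Kpq : K (p + q).
    by have := coneK 1 1 p q ler01 ler01 Kp Kq; rewrite !scale1r.
  by have := var _ Kpq; rewrite addrAC subrr add0r.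
split => // q Kq; rewrite -ler_sqr ?nnegrE //.
have -> : w - q = (w - p) - (q - p) by rewrite opprB addrA subrK.
rewrite [X in _ <= X](sqr_normB hip) (ipBr hip) orth.
by have := neg _ Kq; have := sqr_ge0 `|q - p|; lra.
Qed.

Hypothesis closedK : closed K.
Context {z : H}.
Hypothesis Kz : K z.

Lemma metric_proj_nearest w : is_nearest K w (metric_proj K w).
Proof.
by apply: xgetPex; exact: (nearest_exists hip convex_cone_convex closedK z Kz w).
Qed.

Lemma metric_proj_eq w p : is_nearest K w p -> metric_proj K w = p.
Proof. exact: (nearest_unique hip convex_cone_convex (metric_proj_nearest w)). Qed.

End ConvexCone.

Lemma nonpos_series_cvg0_eq0 {R : realType} (c : R ^nat) :
  (forall n, c n <= 0) -> series c @ \oo --> 0 -> forall n, c n = 0.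
Proof.
move=> c_le0 c0 n; apply/le_anti; rewrite c_le0 /=.
have sc_noninc : nonincreasing_seq (series c).
  by apply/nonincreasing_seqP => N; rewrite /series /= big_nat_recr //= gerDl.
have := nonincreasing_cvgn_ge sc_noninc (cvgP _ c0) n.+1.
rewrite (cvg_lim _ c0) // /series /= big_nat_recr //= => sc_ge0.
have : \sum_(0 <= k < n) c k <= 0 by apply: sumr_le0 => k _.
by move: sc_ge0; move: (\sum_(0 <= k < n) c k) => s; lra.
Qed.

Lemma convex_cone_zeroU {R : realType} {H : completeNormedModType R} (A : set H) :
  (forall (l1 l2 : R) x y, 0 < l1 -> 0 < l2 -> A x -> A y -> A (l1 *: x + l2 *: y)) ->
  convex_cone ([set 0] `|` A).
Proof.
move=> combA.
have scaleA c x : 0 < c -> A x -> A (c *: x).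
  move=> c_gt0 Ax; rewrite [c]splitr scalerDl.
  by apply: combA => //; rewrite divr_gt0.
have scale0A c x : 0 <= c -> ([set 0] `|` A) x -> ([set 0] `|` A) (c *: x).
  move=> + [->|Ax]; first by left; rewrite scaler0.
  rewrite le_eqVlt => /predU1P[<-|c_gt0]; first by left; rewrite scale0r.
  by right; exact: scaleA.
move=> l1 l2 x y l1_ge0 l2_ge0 [->|Ax].
  by rewrite scaler0 add0r; exact: scale0A.
case=> [->|Ay]; first by rewrite scaler0 addr0; apply: scale0A => //; right.
move: l1_ge0 l2_ge0; rewrite !le_eqVlt => /predU1P[<-|l1_gt0] /predU1P[<-|l2_gt0].
- by left; rewrite !scale0r addr0.
- by rewrite scale0r add0r; right; exact: scaleA.
- by rewrite scale0r addr0; right; exact: scaleA.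
- by right; exact: combA.
Qed.

Section SumOver.
Context {R : realType} {H : completeNormedModType R}.
Implicit Types (S : set nat) (u : nat -> H) (x : H).

Lemma sum_over_setT S u x :
  sum_over S u x <-> sum_over setT (fun n => if n \in S then u n else 0) x.
Proof.
rewrite /sum_over.
have -> // : (fun n => if n \in setT then if n \in S then u n else 0 else 0) =
  (fun n => if n \in S then u n else 0) by apply: funext => n; rewrite in_setT.
Qed.

Lemma eq_sum_over {S u u' x} :
  (forall n, S n -> u n = u' n) -> sum_over S u x -> sum_over S u' x.
Proof.
move=> uu'; rewrite /sum_over; have -> // : (fun n => if n \in S then u n else 0) =
  (fun n => if n \in S then u' n else 0).
by apply: funext => n; case: ifP => // /set_mem /uu'.
Qed.

Lemma sum_over_comb (l1 l2 : R) {S u1 u2 x1 x2} :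
  sum_over S u1 x1 -> sum_over S u2 x2 ->
  sum_over S (fun n => l1 *: u1 n + l2 *: u2 n) (l1 *: x1 + l2 *: x2).
Proof.
rewrite /sum_over => h1 h2.
have -> : (fun n => if n \in S then l1 *: u1 n + l2 *: u2 n else 0) =
    l1 *: (fun n => if n \in S then u1 n else 0) +
    l2 *: (fun n => if n \in S then u2 n else 0).
  by apply: funext => n; rewrite !fctE; case: ifP; rewrite ?scaler0 ?addr0.
by rewrite seriesD !seriesZ; apply: cvgD; apply: cvgZ => //; exact: cvg_cst.
Qed.

Context {ip : H -> H -> R}.
Hypothesis hip : inner_product_of_norm ip.

Lemma cvg_ip_sum_over y {S u x} : sum_over S u x ->
  series (fun n => if n \in S then ip y (u n) else 0) @ \oo --> ip y x.
Proof.
move=> /(cvg_ipr_series hip y).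
have -> // : (fun n => ip y (if n \in S then u n else 0)) =
  (fun n => if n \in S then ip y (u n) else 0).
by apply: funext => n; case: ifP; rewrite ?(ip0r hip).
Qed.

Lemma ip_sum_over_eq0 y {S u x} :
  (forall n, S n -> ip y (u n) = 0) -> sum_over S u x -> ip y x = 0.
Proof.
move=> u_orth /(cvg_ip_sum_over y).
have -> : series (fun n => if n \in S then ip y (u n) else 0) = fun=> 0.
  apply: funext => N; apply: big1 => n _.
  by case: ifP => // /set_mem /u_orth.
by move=> /(cvg_lim (@Rhausdorff _)) <-; rewrite lim_cst.
Qed.

End SumOver.

Section PositiveCone.
Context {R : realType} {H : completeNormedModType R}.
Variable v : nat -> H.
Local Notation K := (pos_cone v).

Lemma pos_cone_convex_cone : convex_cone K.
Proof.
move=> l1 l2 x y l1_ge0 l2_ge0 [a [a_ge0 ha]] [b [b_ge0 hb]].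
exists (fun n => l1 * a n + l2 * b n); split.
  by move=> n; rewrite addr_ge0 ?mulr_ge0.
by apply: (eq_sum_over _ (sum_over_comb l1 l2 ha hb)) => n _; rewrite scalerDl !scalerA.
Qed.

Lemma pos_cone_gen m : K (v m).
Proof.
exists (fun n => (n == m)%:R); split => [n|]; first by rewrite ler0n.
rewrite /sum_over.
apply: cvg_near_cst; exists m.+1 => // N /= mN; apply/esym.
rewrite /series /=; elim: N mN => [//|N IH]; rewrite ltnS leq_eqVlt big_nat_recr //=.
case/predU1P => [<-|mN]; last by rewrite IH // in_setT gtn_eqF // scale0r addr0.
rewrite in_setT eqxx scale1r big1_seq ?add0r // => n.
by rewrite mem_index_iota in_setT => /andP[_ /ltn_eqF ->]; rewrite scale0r.
Qed.

Context {ip : H -> H -> R}.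
Hypothesis hip : inner_product_of_norm ip.
Hypothesis closedK : closed K.
Local Notation P := (metric_proj K).

Lemma metric_proj_pos_cone w : is_nearest K w (P w).
Proof.
exact: (metric_proj_nearest pos_cone_convex_cone hip closedK (pos_cone_gen 0)).
Qed.

Lemma metric_proj_pos_cone_eq w p : is_nearest K w p -> P w = p.
Proof. exact: (metric_proj_eq pos_cone_convex_cone hip closedK (pos_cone_gen 0)). Qed.

Lemma metric_proj_orthogonal {S : set nat} {a w} :
  (forall n, S n -> 0 < a n) -> sum_over S (fun n => a n *: v n) (P w) ->
  forall n, S n -> ip (w - P w) (v n) = 0.
Proof.
(* The terms a_m <w - P w, v_m> are nonpositive and sum to <w - P w, P w> = 0. *)
move=> a_gt0 hs n Sn.
have [_ neg orth] :=
  (nearest_coneP pos_cone_convex_cone hip _ _).1 (metric_proj_pos_cone w).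
have terms_le0 (m : nat) :
    (if m \in S then ip (w - P w) (a m *: v m) else 0) <= 0.
  case: ifP => // /set_mem Sm; rewrite (ipZr hip) mulr_ge0_le0 //.
    exact: ltW (a_gt0 _ Sm).
  exact: neg (pos_cone_gen m).
have sum0 := cvg_ip_sum_over hip (w - P w) hs; rewrite orth in sum0.
have /eqP := nonpos_series_cvg0_eq0 _ terms_le0 sum0 n.
by rewrite mem_set // (ipZr hip) mulf_eq0 gt_eqF ?a_gt0 //= => /eqP.
Qed.

End PositiveCone.

Section ProjectionFaces.
Context {R : realType} {H : completeNormedModType R} {ip : H -> H -> R}.
Hypothesis hip : inner_product_of_norm ip.
Context {v : nat -> H}.
Local Notation K := (pos_cone v).
Local Notation P := (metric_proj K).

Lemma HVS_support S w : HVS v S w -> exists a : nat -> R,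
  [/\ forall n, 0 <= a n, S = [set n | 0 < a n]
    & sum_over setT (fun n => a n *: v n) (P w)].
Proof.
move=> [a [a_gt0 ha]]; exists (fun n => if n \in S then a n else 0); split.
- by move=> n; case: ifP => // /set_mem /a_gt0 /ltW.
- apply/seteqP; split=> n /=; first by move=> Sn; rewrite mem_set // a_gt0.
  by case: ifP; rewrite ?ltxx // => /set_mem.
- by move/sum_over_setT: ha; apply: eq_sum_over => n _; case: ifP; rewrite ?scale0r.
Qed.

Lemma HVS_disjoint S T w :
  no_positive_relations v -> HVS v S w -> HVS v T w -> S = T.
Proof.
move=> npr /HVS_support[a [a_ge0 -> ha]] /HVS_support[b [b_ge0 -> hb]].
by rewrite (funext (npr _ _ _ a_ge0 b_ge0 ha hb)).
Qed.

Hypothesis closedK : closed K.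

Lemma HVS_cover w : exists S, HVS v S w.
Proof.
have [a [a_ge0 ha]] := (metric_proj_pos_cone v hip closedK w).1.
exists [set n | 0 < a n], a; split => //; apply/sum_over_setT.
apply: eq_sum_over ha => n _; have [an_gt0|an_le0] := ltP 0 (a n).
  by rewrite mem_set.
have an0 : a n = 0 by apply/le_anti; rewrite an_le0 a_ge0.
by rewrite memNset /= an0 ?ltxx // scale0r.
Qed.

Lemma metric_proj_conic_comb S (l1 l2 : R) w1 w2 :
  0 < l1 -> 0 < l2 -> HVS v S w1 -> HVS v S w2 ->
  P (l1 *: w1 + l2 *: w2) = l1 *: P w1 + l2 *: P w2.
Proof.
move=> l1_gt0 l2_gt0 [a [a_gt0 ha]] [b [b_gt0 hb]].
have [K1 neg1 orth1] := (nearest_coneP (pos_cone_convex_cone v) hip _ _).1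
  (metric_proj_pos_cone v hip closedK w1).
have [K2 neg2 orth2] := (nearest_coneP (pos_cone_convex_cone v) hip _ _).1
  (metric_proj_pos_cone v hip closedK w2).
have orth12 : ip (w1 - P w1) (P w2) = 0.
  apply: (ip_sum_over_eq0 hip _ _ hb) => n Sn.
  by rewrite (ipZr hip) (metric_proj_orthogonal v hip closedK a_gt0 ha) ?mulr0.
have orth21 : ip (w2 - P w2) (P w1) = 0.
  apply: (ip_sum_over_eq0 hip _ _ ha) => n Sn.
  by rewrite (ipZr hip) (metric_proj_orthogonal v hip closedK b_gt0 hb) ?mulr0.
apply: (metric_proj_pos_cone_eq v hip closedK).
apply/(nearest_coneP (pos_cone_convex_cone v) hip).
have -> : l1 *: w1 + l2 *: w2 - (l1 *: P w1 + l2 *: P w2) =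
    l1 *: (w1 - P w1) + l2 *: (w2 - P w2).
  by rewrite !scalerBr opprD !addrA; congr (_ + _); rewrite addrAC.
split.
- by apply: pos_cone_convex_cone => //; exact: ltW.
- move=> q Kq; rewrite (ipDl hip) !(ipZl hip).
  by have := neg1 _ Kq; have := neg2 _ Kq; nra.
- rewrite (ipDl hip) !(ipZl hip) !(ipDr hip) !(ipZr hip).
  by rewrite orth1 orth2 orth12 orth21 !(mulr0, addr0).
Qed.

Lemma HVS_conic_comb S (l1 l2 : R) w1 w2 :
  0 < l1 -> 0 < l2 -> HVS v S w1 -> HVS v S w2 -> HVS v S (l1 *: w1 + l2 *: w2).
Proof.
move=> l1_gt0 l2_gt0 hw1 hw2.
rewrite /HVS /= (metric_proj_conic_comb S) //.
move: hw1 hw2 => [a [a_gt0 ha]] [b [b_gt0 hb]].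
exists (fun n => l1 * a n + l2 * b n); split.
  by move=> n Sn; rewrite addr_gt0 ?mulr_gt0 ?a_gt0 ?b_gt0.
by apply: (eq_sum_over _ (sum_over_comb l1 l2 ha hb)) => n _; rewrite scalerDl !scalerA.
Qed.

End ProjectionFaces.

Theorem corollary1p4 (R : realType) (H : completeNormedModType R)
  (ip : H -> H -> R) (v : nat -> H) :
  inner_product_of_norm ip ->
  no_positive_relations v ->
  closed (pos_cone v) ->
  [/\ (forall w : H, exists S : set nat, HVS v S w),
      (forall (S T : set nat) (w : H), HVS v S w -> HVS v T w -> S = T),
      (forall S : set nat, convex_cone ([set 0] `|` HVS v S))
    & (forall (S : set nat) (l1 l2 : R) (w1 w2 : H),
        0 < l1 -> 0 < l2 -> HVS v S w1 -> HVS v S w2 ->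
        metric_proj (pos_cone v) (l1 *: w1 + l2 *: w2) =
        l1 *: metric_proj (pos_cone v) w1 + l2 *: metric_proj (pos_cone v) w2)].
Proof.
move=> hip npr closedK; split.
exact: (HVS_cover hip closedK).
- by move=> S T w; exact: HVS_disjoint.
- by move=> S; apply: convex_cone_zeroU; exact: (HVS_conic_comb hip closedK).
- exact: (metric_proj_conic_comb hip closedK).
Qed.
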